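(* Let $p$ be a prime, $n\ge 3$, $N$ a positive integer, $T=(n-1)(n-2)/2+2(n-1)$, $v_1,v_2\in\mathbb{Z}_p^T$ fixed, $K,M$ independent uniform random vectors on $\mathbb{Z}_p^T$, and $D(x)=(2-x)v_1+(x-1)v_2+(x-1)(x-2)(K+xM)$. Let $\mathcal A:\mathbb{Z}_p^T\to\mathbb{Z}_p$ be an algorithm (a fixed function) whose success probability $q=\mathbb{P}(\mathcal A(\mathbf U)=Z_{n-1}(\mathbf U;p))$ is positive, where $\mathbf U$ is uniform on $\mathbb{Z}_p^T$. Let $\mathcal N$ be the number of $x\in\{3,4,\dots,p\}$ with $\mathcal A(D(x))=Z_{n-1}(D(x);p)$. Then $$\mathbb{P}\big(\mathcal N\ge (p-2)q/2\big)\ge 1-\frac{1}{(p-2)q^2},$$ where the probability is over $K$ and $M$.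
   Context: Arithmetic is in $\mathbb{Z}_p$; elements of $\{3,\dots,p\}$ are viewed as residues mod $p$. For $\boldsymbol\sigma\in\{-1,1\}^{m}$, $I_m(\boldsymbol\sigma)=|\{(i,j):1\le i<j\le m,\ \sigma_i\ne\sigma_j\}|$ and $f(m,\boldsymbol\sigma)=\frac{m(m-1)}2-m-I_m(\boldsymbol\sigma)$. A vector in $\mathbb{Z}_p^T$ with $T=m(m-1)/2+2m$ is read as $(\mathbf J,\mathbf B,\mathbf C)$ (first $m(m-1)/2$ coordinates are $J_{ij}$, $1\le i<j\le m$, then $B_1,\dots,B_m$, then $C_1,\dots,C_m$), and $$Z_m(\mathbf J,\mathbf B,\mathbf C;p)=\sum_{\boldsymbol\sigma\in\{-1,1\}^m}2^{Nf(m,\boldsymbol\sigma)}\Big(\prod_{i:\sigma_i=-1}B_i\Big)\Big(\prod_{i:\sigma_i=+1}C_i\Big)\Big(\prod_{i<j:\sigma_i\ne\sigma_j}J_{ij}\Big)\pmod p.$$ *)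

From HB Require Import structures.
From mathcomp Require Import all_boot all_order all_algebra.
Set Implicit Arguments. Unset Strict Implicit. Unset Printing Implicit Defensive.
Import Order.TTheory GRing.Theory Num.Theory.
Local Open Scope ring_scope.

Definition Tdim (m : nat) : nat := (m * (m - 1) %/ 2 + 2 * m)%N.

(* 0-based index layout of (J, B, C); pairs (i,j), i<j, in lexicographic order. *)
Definition Jidx (m i j : nat) : nat := (i * m - (i * i.+1) %/ 2 + (j - i - 1))%N.
Definition Bidx (m i : nat) : nat := (m * (m - 1) %/ 2 + i)%N.
Definition Cidx (m i : nat) : nat := (m * (m - 1) %/ 2 + m + i)%N.

(* k-th coordinate (0-based) of a row vector, 0 if out of range. *)
Definition coord {R : nzRingType} {t : nat} (v : 'rV[R]_t) (k : nat) : R :=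
  odflt 0 (omap (v ord0) (insub k)).

(* sigma encoded as s : {ffun 'I_m -> bool}, s i = true <-> sigma_i = +1 *)
Definition Inv (m : nat) (s : {ffun 'I_m -> bool}) : nat :=
  #|[set ij : 'I_m * 'I_m | (ij.1 < ij.2)%N && (s ij.1 != s ij.2)]|.

Definition fexp (m : nat) (s : {ffun 'I_m -> bool}) : int :=
  ((m * (m - 1) %/ 2)%:Z - m%:Z - (Inv s)%:Z)%R.

Definition Zpart (p N m : nat) (v : 'rV['F_p]_(Tdim m)) : 'F_p :=
  \sum_(s : {ffun 'I_m -> bool})
     (2%:R : 'F_p) ^ ((N%:Z) * fexp s)
     * (\prod_(i : 'I_m | ~~ s i) coord v (Bidx m i))
     * (\prod_(i : 'I_m | s i) coord v (Cidx m i))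
     * (\prod_(ij : 'I_m * 'I_m | (ij.1 < ij.2)%N && (s ij.1 != s ij.2))
          coord v (Jidx m ij.1 ij.2)).

Definition Dvec (p t : nat) (v1 v2 K M : 'rV['F_p]_t) (x : 'F_p) : 'rV['F_p]_t :=
  (2 - x) *: v1 + (x - 1) *: v2 + ((x - 1) * (x - 2)) *: (K + x *: M).

Definition succ_prob (p N m : nat) (A : 'rV['F_p]_(Tdim m) -> 'F_p) : rat :=
  (#|[set U : 'rV['F_p]_(Tdim m) | A U == Zpart N U]|%:R
    / #|{: 'rV['F_p]_(Tdim m)}|%:R)%R.

Definition Ncount (p N m : nat) (A : 'rV['F_p]_(Tdim m) -> 'F_p)
    (v1 v2 K M : 'rV['F_p]_(Tdim m)) : nat :=
  count (fun x : nat => A (Dvec v1 v2 K M x%:R) == Zpart N (Dvec v1 v2 K M x%:R))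
        (iota 3 (p - 2)).

(* For 3 <= x <= p the coefficient (x-1)(x-2) is a unit of F_p, so D(x) is uniform
   on F_p^T; for two such x != y the map (K, M) |-> (K + xM, K + yM) is a bijection,
   so (D(x), D(y)) is uniform on pairs.  The events "A succeeds on D(x)" are thus
   pairwise independent with probability q, whence the count of successes has mean
   (p-2)q and variance (p-2)(q - q^2) <= (p-2)/4, and Chebyshev's inequality at
   distance (p-2)q/2 gives the bound. *)

From HB Require Import structures.
From mathcomp Require Import all_boot all_order all_algebra.
From mathcomp Require Import ring lra zify.
Import Order.TTheory GRing.Theory Num.Theory.
Set Implicit Arguments. Unset Strict Implicit. Unset Printing Implicit Defensive.
Local Open Scope ring_scope.

Lemma sumr_const_seq (V : nmodType) (I : Type) (s : seq I) (x : V) :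
  \sum_(i <- s) x = x *+ size s.
Proof. by elim: s => [|y s IH]; rewrite ?big_nil ?big_cons ?IH ?mulrS. Qed.

Lemma natr_count (R : semiRingType) (I : Type) (a : pred I) (s : seq I) :
  (count a s)%:R = \sum_(i <- s) (a i)%:R :> R.
Proof.
rewrite -sum1_count natr_sum [LHS]big_mkcond.
by apply: eq_bigr => i _; case: (a i).
Qed.

Lemma sumr_pred_card (R : semiRingType) (S : finType) (P : pred S) :
  \sum_z (P z)%:R = #|[set z | P z]|%:R :> R.
Proof.
rewrite -sum1dep_card natr_sum [RHS]big_mkcond.
by apply: eq_bigr => z _; case: (P z).
Qed.

Lemma card_mul_le_sum (R : numDomainType) (S : finType) (A : {set S})
    (F : S -> R) (t : R) :
  (forall z, 0 <= F z) -> (forall z, z \in A -> t <= F z) ->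
  #|A|%:R * t <= \sum_z F z.
Proof.
move=> F_ge0 A_ge; rewrite mulr_natl -sumr_const [X in _ <= X](bigID (mem A)) /=.
rewrite -[X in X <= _]addr0; apply: lerD; last exact: sumr_ge0.
exact: ler_sum.
Qed.

Section SecondMoment.

Variables (R : realFieldType) (S : finType) (I : eqType).
Variables (s : seq I) (X : I -> S -> bool) (q : R).
Hypothesis s_uniq : uniq s.
Hypothesis card_X : forall i, i \in s -> #|[set z | X i z]|%:R = q * #|S|%:R.
Hypothesis card_XX : forall i j, i \in s -> j \in s -> i != j ->
  #|[set z | X i z && X j z]|%:R = q ^+ 2 * #|S|%:R.

Local Notation k := ((size s)%:R : R).
Local Notation c := (#|S|%:R : R).
Local Notation cnt z := ((count (X^~ z) s)%:R : R).

Lemma sum_count : \sum_z cnt z = k * q * c.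
Proof.
under eq_bigr do rewrite natr_count.
rewrite exchange_big (eq_big_seq (fun=> q * c)) => [|i si] /=; last first.
  by rewrite sumr_pred_card card_X.
by rewrite sumr_const_seq -mulrA mulr_natl.
Qed.

Lemma sum_indicator_mul i j : i \in s -> j \in s ->
  \sum_z (X i z)%:R * (X j z)%:R = q ^+ 2 * c + (j == i)%:R * (q - q ^+ 2) * c.
Proof.
move=> si sj; under eq_bigr do rewrite -natrM mulnb.
have [->|ji] := eqVneq j i.
  under eq_bigr do rewrite andbb.
  by rewrite sumr_pred_card card_X // mul1r; ring.
by rewrite sumr_pred_card card_XX 1?eq_sym // !mul0r addr0.
Qed.

Lemma sum_count_sqr :
  \sum_z cnt z ^+ 2 = k ^+ 2 * q ^+ 2 * c + k * (q - q ^+ 2) * c.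
Proof.
under eq_bigr do rewrite expr2 natr_count big_distrlr.
rewrite exchange_big /=; under eq_bigr do rewrite exchange_big /=.
rewrite (eq_big_seq (fun=> k * q ^+ 2 * c + (q - q ^+ 2) * c)) => [|i si] /=.
  by rewrite sumr_const_seq -mulr_natl; ring.
under eq_big_seq => j sj do rewrite sum_indicator_mul //.
rewrite big_split /= sumr_const_seq -mulr_suml -mulr_suml -natr_count.
by rewrite (count_uniq_mem _ s_uniq) si mul1r -mulr_natl; ring.
Qed.

Lemma sum_count_dev_sqr : \sum_z (cnt z - k * q) ^+ 2 = k * (q - q ^+ 2) * c.
Proof.
have expand z : (cnt z - k * q) ^+ 2 = cnt z ^+ 2 - 2 * k * q * cnt z + (k * q) ^+ 2.
  by ring.
under eq_bigr do rewrite expand.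
rewrite !big_split /= sumrN -mulr_sumr sum_count_sqr sum_count sumr_const.
by rewrite -mulr_natl; ring.
Qed.

Lemma card_count_ge_half_mean : 0 < q -> (0 < #|S|)%N ->
  1 - 1 / (k * q ^+ 2) <= #|[set z | k * q / 2 <= cnt z]|%:R / c.
Proof.
move=> q_gt0 S_gt0; set G := [set z | _].
have c_gt0 : 0 < c by rewrite ltr0n.
have [s0 | s_gt0] := posnP (size s).
  have -> : G = setT by apply/setP => z; rewrite !inE s0 !mul0r ler0n.
  by rewrite cardsT s0 mul0r invr0 mulr0 subr0 divff ?gt_eqF.
have kq_gt0 : 0 < k * q ^+ 2 by rewrite mulr_gt0 ?exprn_gt0 ?ltr0n.
have bad_bound : #|~: G|%:R * (k * q / 2) ^+ 2 <= k * (q - q ^+ 2) * c.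
  rewrite -sum_count_dev_sqr; apply: card_mul_le_sum => [z|z]; first exact: sqr_ge0.
  rewrite !inE -ltNge => cnt_lt.
  have := ler0n R (count (X^~ z) s); nra.
have bad_le : #|~: G|%:R * (k * q ^+ 2) <= c.
  have k_gt0 : 0 < k by rewrite ltr0n.
  have q_quarter : q - q ^+ 2 <= 1 / 4 by have := sqr_ge0 (2 * q - 1); nra.
  rewrite -(ler_pM2l k_gt0) -(ler_pM2r (_ : 0 < 1 / 4)) ?divr_gt0 //.
  have -> : k * (#|~: G|%:R * (k * q ^+ 2)) * (1 / 4)
          = #|~: G|%:R * (k * q / 2) ^+ 2 by field.
  apply: le_trans bad_bound _.
  by rewrite [leLHS]mulrAC ler_wpM2l // mulr_ge0 // ltW.
have -> : #|G|%:R = c - #|~: G|%:R by rewrite -(cardsC G) natrD addrK.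
rewrite mulrBl divff ?gt_eqF // lerD2l lerN2 ler_pdivrMr // mul1r.
by rewrite mulrC ler_pdivlMr.
Qed.

End SecondMoment.

Lemma Fp_natr_inj p i j : prime p -> (0 < i <= p)%N -> (0 < j <= p)%N ->
  (i%:R : 'F_p) = j%:R -> i = j.
Proof.
move=> p_pr; wlog le_ij : i j / (i <= j)%N => [hwlog Hi Hj eq_ij|Hi Hj eq_ij].
  by case/orP: (leq_total i j) => ?; [|apply/esym]; apply: hwlog.
have : (j - i)%:R == 0 :> 'F_p by rewrite natrB // eq_ij subrr.
by rewrite -(dvdn_pcharf (pchar_Fp p_pr)) /dvdn modn_small; lia.
Qed.

Lemma Fp_natr_sub1_sub2_neq0 p x : prime p -> (3 <= x <= p)%N ->
  ((x%:R : 'F_p) - 1) * (x%:R - 2) != 0.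
Proof.
move=> p_pr x_range; rewrite mulf_neq0 // subr_eq0; apply/eqP.
  by move=> /(@Fp_natr_inj p x 1 p_pr); lia.
by move=> /(@Fp_natr_inj p x 2 p_pr); lia.
Qed.

Section DvecCard.

Variables (p t : nat) (v1 v2 : 'rV['F_p]_t).
Local Notation V := 'rV['F_p]_t.
Local Notation D KM a := (Dvec v1 v2 KM.1 KM.2 a).

Lemma Dvec_fst_inj a : (a - 1) * (a - 2) != 0 ->
  injective (fun KM : V * V => (D KM a, KM.2)).
Proof.
move=> nz_a [K M] [K' M'] /= [eqD eqM]; subst M'.
by move: eqD; rewrite /Dvec => /addrI /(scalerI nz_a) /addIr ->.
Qed.

Lemma Dvec_pair_inj a b : (a - 1) * (a - 2) != 0 -> (b - 1) * (b - 2) != 0 ->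
  a != b -> injective (fun KM : V * V => (D KM a, D KM b)).
Proof.
move=> nz_a nz_b neq_ab [K M] [K' M'] /= [].
rewrite /Dvec => /addrI /(scalerI nz_a) eq_a /addrI /(scalerI nz_b) eq_b.
have diff_ab (K0 M0 : V) : (K0 + a *: M0) - (K0 + b *: M0) = (a - b) *: M0.
  by rewrite opprD addrACA subrr add0r scalerBl.
have eq_M : M = M'.
  apply: (scalerI (_ : a - b != 0)); first by rewrite subr_eq0.
  by rewrite -(diff_ab K M) -(diff_ab K' M') eq_a eq_b.
by move: eq_a; rewrite eq_M => /addIr ->.
Qed.

Lemma card_Dvec_preim (P : pred V) a : (a - 1) * (a - 2) != 0 ->
  #|[set KM : V * V | P (D KM a)]| = (#|[set U | P U]| * #|V|)%N.
Proof.
move=> nz_a; rewrite -cardsT -cardsX -[RHS](card_preimset _ (Dvec_fst_inj nz_a)).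
by apply: eq_card => KM; rewrite !inE andbT.
Qed.

Lemma card_Dvec_preim2 (P : pred V) a b :
  (a - 1) * (a - 2) != 0 -> (b - 1) * (b - 2) != 0 -> a != b ->
  #|[set KM : V * V | P (D KM a) && P (D KM b)]| = (#|[set U | P U]| ^ 2)%N.
Proof.
move=> nz_a nz_b neq_ab; rewrite -mulnn -cardsX.
rewrite -[RHS](card_preimset _ (Dvec_pair_inj nz_a nz_b neq_ab)).
by apply: eq_card => KM; rewrite !inE.
Qed.

End DvecCard.

Theorem lemma3 (p n N : nat) (hp : prime p) (hn : (3 <= n)%N) (hN : (0 < N)%N)
  (v1 v2 : 'rV['F_p]_(Tdim n.-1)) (A : 'rV['F_p]_(Tdim n.-1) -> 'F_p) :
  0 < succ_prob N A ->
  (#|[set KM : 'rV['F_p]_(Tdim n.-1) * 'rV['F_p]_(Tdim n.-1) |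
        (p - 2)%:R * succ_prob N A / 2 <= (Ncount N A v1 v2 KM.1 KM.2)%:R :> rat]|%:R
     / #|{: 'rV['F_p]_(Tdim n.-1) * 'rV['F_p]_(Tdim n.-1)}|%:R : rat)
  >= 1 - 1 / ((p - 2)%:R * succ_prob N A ^+ 2).
Proof.
move=> q_gt0.
pose V := 'rV['F_p]_(Tdim n.-1).
pose good U := A U == Zpart N U.
pose D x (KM : V * V) := Dvec v1 v2 KM.1 KM.2 x%:R.
have V_gt0 : (0 < #|V|)%N by apply/card_gt0P; exists 0.
have V_neq0 : #|V|%:R != 0 :> rat by rewrite pnatr_eq0 -lt0n.
have p_gt1 := prime_gt1 hp.
have in_range x : (x \in iota 3 (p - 2)) = (3 <= x <= p)%N.
  by rewrite mem_iota; lia.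
have card_good x : x \in iota 3 (p - 2) ->
    #|[set KM | good (D x KM)]|%:R = succ_prob N A * #|{: V * V}|%:R.
  rewrite in_range => /(Fp_natr_sub1_sub2_neq0 hp) nz_x.
  by rewrite card_Dvec_preim // card_prod !natrM /succ_prob; field.
have card_good2 x y : x \in iota 3 (p - 2) -> y \in iota 3 (p - 2) -> x != y ->
    #|[set KM | good (D x KM) && good (D y KM)]|%:R
    = succ_prob N A ^+ 2 * #|{: V * V}|%:R.
  rewrite !in_range => xs ys neq_xy.
  have neq_xy_Fp : (x%:R : 'F_p) != y%:R.
    by apply: contra neq_xy => /eqP /(Fp_natr_inj hp) -> //; lia.
  rewrite card_Dvec_preim2 ?Fp_natr_sub1_sub2_neq0 //.
  by rewrite natrX card_prod natrM /succ_prob; field.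
have := card_count_ge_half_mean (iota_uniq 3 (p - 2)) card_good card_good2 q_gt0.
by rewrite size_iota card_prod muln_gt0 V_gt0; apply.
Qed.
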